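(* No finite subset of $T$ containing at least two points is full.
   Context: Let $X_1,X_2,X_3$ be pairwise disjoint nonempty sets and $\Omega=X_1\times X_2\times X_3$, with projections $\Pi_i:\Omega\to X_i$. A set $S\subset\Omega$ is good if every function $f:S\to\mathbb C$ can be written $f(w_1,w_2,w_3)=u_1(w_1)+u_2(w_2)+u_3(w_3)$ for all $(w_1,w_2,w_3)\in S$, for some functions $u_i:X_i\to\mathbb C$. A set $S$ is full if it is a maximal good subset of $\Pi_1S\times\Pi_2S\times\Pi_3S$. Construction: fix pairwise distinct elements $x_1,y_1,\alpha_{5k-4},\alpha_{5k-1}$ ($k\ge1$) of $X_1$; pairwise distinct elements $x_2,y_2,\alpha_{5k-3},\alpha_{5k}$ ($k\ge1$) of $X_2$; pairwise distinct elements $x_3,z_3,\alpha_{5k-2}$ ($k\ge1$) of $X_3$. Set the convention $\alpha_{-3}:=y_2$, $\alpha_{-2}:=z_3$. Define $a_1=(x_1,x_2,x_3)$, $a_2=(y_1,y_2,x_3)$, $a_3=(y_1,x_2,z_3)$ and for $n\ge1$: $a_{5n-1}=(\alpha_{5n-4},\alpha_{5n-3},\alpha_{5n-2})$, $a_{5n}=(\alpha_{5n-1},\alpha_{5n},\alpha_{5n-2})$, $a_{5n+1}=(\alpha_{5n-4},\alpha_{5n},\alpha_{5n-7})$, $a_{5n+2}=(\alpha_{5n-1},\alpha_{5n-3},x_3)$, $a_{5n+3}=(x_1,\alpha_{5n-8},\alpha_{5n-2})$. Let $T=\{a_i:i\ge1\}$. *)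

(* Complex numbers as the additive group R*R (only addition is used). *)
From Stdlib Require Import Reals List.
Open Scope R_scope.

Definition Cplx : Type := (R * R)%type.
Definition Cadd (z w : Cplx) : Cplx := (fst z + fst w, snd z + snd w).

Section Defs.
Context {X1 X2 X3 : Type}.
Definition Omega : Type := (X1 * X2 * X3)%type.
Definition P1 (w : Omega) : X1 := fst (fst w).
Definition P2 (w : Omega) : X2 := snd (fst w).
Definition P3 (w : Omega) : X3 := snd w.

Definition good (S : Omega -> Prop) : Prop :=
  forall f : Omega -> Cplx, exists (u1 : X1 -> Cplx) (u2 : X2 -> Cplx) (u3 : X3 -> Cplx),
    forall w, S w -> f w = Cadd (Cadd (u1 (P1 w)) (u2 (P2 w))) (u3 (P3 w)).

Definition box (S : Omega -> Prop) (w : Omega) : Prop :=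
  (exists v, S v /\ P1 v = P1 w) /\ (exists v, S v /\ P2 v = P2 w) /\
  (exists v, S v /\ P3 v = P3 w).

Definition full (S : Omega -> Prop) : Prop :=
  good S /\
  (forall S' : Omega -> Prop,
     (forall w, S w -> S' w) -> (forall w, S' w -> box S w) -> good S' ->
     forall w, S' w -> S w).

Definition finite_set (S : Omega -> Prop) : Prop :=
  exists l : list Omega, forall w, S w <-> In w l.
End Defs.

(* For k >= 1:
   A k = alpha_{5k-4}, D k = alpha_{5k-1} in X1;
   B k = alpha_{5k-3}, E k = alpha_{5k}   in X2;
   C k = alpha_{5k-2}                     in X3.
   The conventions alpha_{-3} = y2, alpha_{-2} = z3 are Bx/Cx at index 0. *)
Definition Bx {X2 : Type} (y2 : X2) (B : nat -> X2) (n : nat) : X2 :=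
  match n with O => y2 | _ => B n end.
Definition Cx {X3 : Type} (z3 : X3) (C : nat -> X3) (n : nat) : X3 :=
  match n with O => z3 | _ => C n end.

Definition distinct_data {X1 X2 X3 : Type}
  (x1 y1 : X1) (A D : nat -> X1) (x2 y2 : X2) (B E : nat -> X2)
  (x3 z3 : X3) (C : nat -> X3) : Prop :=
  x1 <> y1 /\
  (forall k, (1 <= k)%nat -> A k <> x1 /\ A k <> y1 /\ D k <> x1 /\ D k <> y1) /\
  (forall k l, (1 <= k)%nat -> (1 <= l)%nat ->
     (A k = A l -> k = l) /\ (D k = D l -> k = l) /\ A k <> D l) /\
  x2 <> y2 /\
  (forall k, (1 <= k)%nat -> B k <> x2 /\ B k <> y2 /\ E k <> x2 /\ E k <> y2) /\
  (forall k l, (1 <= k)%nat -> (1 <= l)%nat ->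
     (B k = B l -> k = l) /\ (E k = E l -> k = l) /\ B k <> E l) /\
  x3 <> z3 /\
  (forall k, (1 <= k)%nat -> C k <> x3 /\ C k <> z3) /\
  (forall k l, (1 <= k)%nat -> (1 <= l)%nat -> C k = C l -> k = l).

Definition Tset {X1 X2 X3 : Type}
  (x1 y1 : X1) (A D : nat -> X1) (x2 y2 : X2) (B E : nat -> X2)
  (x3 z3 : X3) (C : nat -> X3) (w : X1 * X2 * X3) : Prop :=
  w = (x1, x2, x3) \/                                   (* a_1 *)
  w = (y1, y2, x3) \/                                   (* a_2 *)
  w = (y1, x2, z3) \/                                   (* a_3 *)
  exists n : nat, (1 <= n)%nat /\
   (w = (A n, B n, C n) \/                               (* a_{5n-1} *)
    w = (D n, E n, C n) \/                               (* a_{5n}   *)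
    w = (A n, E n, Cx z3 C (n - 1)) \/                   (* a_{5n+1}: alpha_{5n-7} *)
    w = (D n, B n, x3) \/                                (* a_{5n+2} *)
    w = (x1, Bx y2 B (n - 1), C n)).                     (* a_{5n+3}: alpha_{5n-8} *)

(* A certificate is a triple of real functions (d1, d2, d3) on X1, X2, X3; it
   annihilates S when d1 (w1) + d2 (w2) + d3 (w3) = 0 for every w in S.  If a certificate
   annihilates a good set S but not a point p, then S + {p} is still good (correct any
   decomposition along multiples of d to fit the value at p), so if moreover p lies in the
   box Pi_1 S x Pi_2 S x Pi_3 S, S is not maximal.  Such a p exists as soon as the
   certificate takes two different "profiles" (d1 w1, d2 w2, d3 w3) on S: mixing the
   coordinates of the two points gives a box point outside the kernel.

   The points of T are grouped into generations: generation 0 is {a1, a2, a3, a8}, and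
   generation n >= 1 consists of a_{5n-1}, ..., a_{5n+2} (the "quad") and a_{5n+8} (the
   "apex").  A finite S has a top generation N.  For N = 0 an explicit certificate
   separates the four points of generation 0.  For N >= 1 the certificate cert_top N
   annihilates every generation up to N and gives three different profiles (quad, apex,
   lower generations); either it separates two points of S, or S lies inside the quad
   (then cert_quad N separates its points) or inside {apex} (impossible for two points). *)

From Stdlib Require Import Reals List Lra Lia Classical ClassicalEpsilon.
Open Scope R_scope.

Definition indic {X : Type} (a x : X) : R :=
  if excluded_middle_informative (x = a) then 1 else 0.

Lemma indic_same {X : Type} (a : X) : indic a a = 1.
Proof. unfold indic; destruct excluded_middle_informative; congruence. Qed.

Lemma indic_other {X : Type} (a x : X) : x <> a -> indic a x = 0.
Proof. unfold indic; destruct excluded_middle_informative; congruence. Qed.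

Section Certificates.
Context {X1 X2 X3 : Type}.

(* A linear functional on functions of the form u1 + u2 + u3, given by its three weights. *)
Record certificate : Type :=
  Certificate { c1 : X1 -> R; c2 : X2 -> R; c3 : X3 -> R }.

Definition eval (d : certificate) (w : X1 * X2 * X3) : R :=
  c1 d (P1 w) + c2 d (P2 w) + c3 d (P3 w).

Definition profile (d : certificate) (w : X1 * X2 * X3) : R * R * R :=
  (c1 d (P1 w), c2 d (P2 w), c3 d (P3 w)).

Definition annihilates (d : certificate) (S : X1 * X2 * X3 -> Prop) : Prop :=
  forall w, S w -> eval d w = 0.

Lemma eval_of_profile d w a b c : profile d w = (a, b, c) -> eval d w = a + b + c.
Proof. unfold profile, eval; intros H; injection H as -> -> ->; reflexivity. Qed.

(* A good set stays good when a point outside the kernel of an annihilating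
   certificate is added: the missing value is supplied by a multiple of the certificate. *)
Lemma good_extend (S : X1 * X2 * X3 -> Prop) d p :
  good S -> annihilates d S -> eval d p <> 0 -> good (fun w => S w \/ w = p).
Proof.
  intros HS Hd Hp f.
  destruct (HS f) as (u1 & u2 & u3 & Hu).
  set (fit := fun w => Cadd (Cadd (u1 (P1 w)) (u2 (P2 w))) (u3 (P3 w))).
  set (t1 := (fst (f p) - fst (fit p)) / eval d p).
  set (t2 := (snd (f p) - snd (fit p)) / eval d p).
  exists (fun x => Cadd (u1 x) (c1 d x * t1, c1 d x * t2)),
         (fun x => Cadd (u2 x) (c2 d x * t1, c2 d x * t2)),
         (fun x => Cadd (u3 x) (c3 d x * t1, c3 d x * t2)).
  assert (Hshift : forall w, Cadd (Cadd (Cadd (u1 (P1 w)) (c1 d (P1 w) * t1, c1 d (P1 w) * t2))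
                                         (Cadd (u2 (P2 w)) (c2 d (P2 w) * t1, c2 d (P2 w) * t2)))
                                   (Cadd (u3 (P3 w)) (c3 d (P3 w) * t1, c3 d (P3 w) * t2))
                             = Cadd (fit w) (eval d w * t1, eval d w * t2)).
  { intros w; unfold fit, eval, Cadd; simpl; f_equal; ring. }
  intros w [Hw | ->]; rewrite Hshift.
  - rewrite (Hd w Hw), (Hu w Hw); unfold Cadd; simpl.
    apply injective_projections; simpl; ring.
  - unfold t1, t2, Cadd; apply injective_projections; simpl; field; exact Hp.
Qed.

Lemma box_mix (S : X1 * X2 * X3 -> Prop) a b c :
  S a -> S b -> S c -> box S (P1 a, P2 b, P3 c).
Proof. intros Ha Hb Hc; split; [exists a | split; [exists b | exists c]]; auto. Qed.

Lemma not_full_of_certificate (S : X1 * X2 * X3 -> Prop) d p :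
  annihilates d S -> eval d p <> 0 -> box S p -> ~ full S.
Proof.
  intros Hd Hp Hbox [HS Hmax].
  assert (Sp : S p).
  { apply (Hmax (fun w => S w \/ w = p)); [auto | | apply (good_extend S d p); auto | auto].
    intros w [Hw | ->]; [repeat split; exists w; auto | exact Hbox]. }
  exact (Hp (Hd p Sp)).
Qed.

(* If two points of S have different profiles, one coordinate differs, and replacing
   that coordinate of the other point yields a box point where the certificate is nonzero. *)
Lemma not_full_of_profiles (S : X1 * X2 * X3 -> Prop) d v w :
  annihilates d S -> S v -> S w -> profile d v <> profile d w -> ~ full S.
Proof.
  intros Hd Hv Hw Hne.
  pose proof (Hd v Hv) as Ev; pose proof (Hd w Hw) as Ew; unfold eval in Ev, Ew.
  destruct (Req_dec (c1 d (P1 v)) (c1 d (P1 w))) as [e1 | n1].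
  - destruct (Req_dec (c2 d (P2 v)) (c2 d (P2 w))) as [e2 | n2].
    + destruct (Req_dec (c3 d (P3 v)) (c3 d (P3 w))) as [e3 | n3].
      * contradiction Hne; unfold profile; rewrite e1, e2, e3; reflexivity.
      * apply (not_full_of_certificate S d (P1 w, P2 w, P3 v)); auto using box_mix.
        unfold eval, P1, P2, P3 in *; simpl in *; intro; apply n3; lra.
    + apply (not_full_of_certificate S d (P1 w, P2 v, P3 w)); auto using box_mix.
      unfold eval, P1, P2, P3 in *; simpl in *; intro; apply n2; lra.
  - apply (not_full_of_certificate S d (P1 v, P2 w, P3 w)); auto using box_mix.
    unfold eval, P1, P2, P3 in *; simpl in *; intro; apply n1; lra.
Qed.

Lemma not_full_of_injective_profile (S : X1 * X2 * X3 -> Prop) d :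
  annihilates d S ->
  (forall v w, S v -> S w -> profile d v = profile d w -> v = w) ->
  (exists v w, S v /\ S w /\ v <> w) -> ~ full S.
Proof.
  intros Hd Hinj (v & w & Hv & Hw & Hvw).
  apply (not_full_of_profiles S d v w Hd Hv Hw); auto.
Qed.

End Certificates.

Lemma list_max_rank {T : Type} (G : nat -> T -> Prop) (l : list T) :
  (forall x, In x l -> exists n, G n x) -> l <> nil ->
  exists N, (exists x, In x l /\ G N x) /\
            forall x, In x l -> exists n, (n <= N)%nat /\ G n x.
Proof.
  induction l as [| a l IH]; intros Hrank Hne; [contradiction |].
  destruct (Hrank a (or_introl eq_refl)) as [n Hn].
  destruct l as [| b l].
  - exists n; split; [exists a; simpl; auto |].
    intros x [<- | []]; exists n; auto.
  - destruct IH as (M & (y & Hy & HM) & Hle);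
      [intros x Hx; apply Hrank; right; exact Hx | discriminate |].
    destruct (Nat.le_gt_cases n M).
    + exists M; split; [exists y; split; [right |]; assumption |].
      intros x [<- | Hx]; [exists n; auto | apply Hle, Hx].
    + exists n; split; [exists a; simpl; auto |].
      intros x [<- | Hx]; [exists n; auto |].
      destruct (Hle x Hx) as (m & Hm & Gm); exists m; split; [lia | exact Gm].
Qed.

Section Construction.
Context {X1 X2 X3 : Type} (x1 y1 : X1) (A D : nat -> X1) (x2 y2 : X2) (B E : nat -> X2)
  (x3 z3 : X3) (C : nat -> X3).

Definition gen0 (w : X1 * X2 * X3) : Prop :=
  w = (x1, x2, x3) \/ w = (y1, y2, x3) \/ w = (y1, x2, z3) \/ w = (x1, y2, C 1%nat).

Definition quad (n : nat) (w : X1 * X2 * X3) : Prop :=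
  w = (A n, B n, C n) \/ w = (D n, E n, C n) \/
  w = (A n, E n, Cx z3 C (n - 1)) \/ w = (D n, B n, x3).

Definition apex (n : nat) : X1 * X2 * X3 := (x1, B n, C (n + 1)%nat).

Definition generation (n : nat) (w : X1 * X2 * X3) : Prop :=
  (n = 0%nat /\ gen0 w) \/ ((1 <= n)%nat /\ (quad n w \/ w = apex n)).

Lemma Tset_generation w :
  Tset x1 y1 A D x2 y2 B E x3 z3 C w -> exists n, generation n w.
Proof.
  unfold Tset, generation, gen0, quad, apex.
  intros [H | [H | [H | (n & Hn & H)]]]; [exists 0%nat; tauto .. |].
  destruct H as [H | [H | [H | [H | H]]]]; [exists n; tauto .. |].
  destruct n as [| [| m]]; [lia | exists 0%nat; tauto |].
  exists (S m); right; split; [lia | right].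
  rewrite H; simpl; repeat f_equal; lia.
Qed.

Lemma top_generation (S : X1 * X2 * X3 -> Prop) :
  (forall w, S w -> Tset x1 y1 A D x2 y2 B E x3 z3 C w) -> finite_set S -> (exists v, S v) ->
  exists N, (exists k, S k /\ generation N k) /\
            forall w, S w -> exists n, (n <= N)%nat /\ generation n w.
Proof.
  intros HT [l Hl] [v Hv].
  destruct (list_max_rank generation l) as (N & (k & Hkl & HkN) & Hle).
  - intros w Hw; apply Tset_generation, HT, Hl, Hw.
  - intros ->; exact (proj1 (Hl v) Hv).
  - exists N; split; [exists k; split; [apply Hl | ]; assumption | intros w Hw; apply Hle, Hl, Hw].
Qed.

Hypothesis Hdata : distinct_data x1 y1 A D x2 y2 B E x3 z3 C.

Ltac from_data := intros; destruct Hdata as (? & ? & ? & ? & ? & ? & ? & ? & ?); firstorder.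

Lemma x1_ne_y1 : x1 <> y1. Proof. from_data. Qed.
Lemma A_ne_x1 k : (1 <= k)%nat -> A k <> x1. Proof. from_data. Qed.
Lemma A_ne_y1 k : (1 <= k)%nat -> A k <> y1. Proof. from_data. Qed.
Lemma D_ne_x1 k : (1 <= k)%nat -> D k <> x1. Proof. from_data. Qed.
Lemma D_ne_y1 k : (1 <= k)%nat -> D k <> y1. Proof. from_data. Qed.
Lemma A_ne_D k l : (1 <= k)%nat -> (1 <= l)%nat -> A k <> D l. Proof. from_data. Qed.
Lemma A_ne_A k l : (1 <= k)%nat -> (1 <= l)%nat -> k <> l -> A k <> A l. Proof. from_data. Qed.
Lemma D_ne_D k l : (1 <= k)%nat -> (1 <= l)%nat -> k <> l -> D k <> D l. Proof. from_data. Qed.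

Lemma x2_ne_y2 : x2 <> y2. Proof. from_data. Qed.
Lemma B_ne_x2 k : (1 <= k)%nat -> B k <> x2. Proof. from_data. Qed.
Lemma B_ne_y2 k : (1 <= k)%nat -> B k <> y2. Proof. from_data. Qed.
Lemma E_ne_x2 k : (1 <= k)%nat -> E k <> x2. Proof. from_data. Qed.
Lemma E_ne_y2 k : (1 <= k)%nat -> E k <> y2. Proof. from_data. Qed.
Lemma B_ne_E k l : (1 <= k)%nat -> (1 <= l)%nat -> B k <> E l. Proof. from_data. Qed.
Lemma B_ne_B k l : (1 <= k)%nat -> (1 <= l)%nat -> k <> l -> B k <> B l. Proof. from_data. Qed.
Lemma E_ne_E k l : (1 <= k)%nat -> (1 <= l)%nat -> k <> l -> E k <> E l. Proof. from_data. Qed.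

Lemma x3_ne_z3 : x3 <> z3. Proof. from_data. Qed.
Lemma C_ne_x3 k : (1 <= k)%nat -> C k <> x3. Proof. from_data. Qed.
Lemma C_ne_z3 k : (1 <= k)%nat -> C k <> z3. Proof. from_data. Qed.
Lemma C_ne_C k l : (1 <= k)%nat -> (1 <= l)%nat -> k <> l -> C k <> C l. Proof. from_data. Qed.
Lemma Cx_ne_x3 k : Cx z3 C k <> x3.
Proof. destruct k; [apply not_eq_sym, x3_ne_z3 | apply C_ne_x3; lia]. Qed.
Lemma Cx_ne_C k l : (1 <= l)%nat -> k <> l -> Cx z3 C k <> C l.
Proof. destruct k; [intros; apply not_eq_sym, C_ne_z3 | apply C_ne_C]; lia. Qed.

Create HintDb distinct.
#[local] Hint Resolve x1_ne_y1 A_ne_x1 A_ne_y1 D_ne_x1 D_ne_y1 A_ne_D A_ne_A D_ne_D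
  x2_ne_y2 B_ne_x2 B_ne_y2 E_ne_x2 E_ne_y2 B_ne_E B_ne_B E_ne_E
  x3_ne_z3 C_ne_x3 C_ne_z3 C_ne_C Cx_ne_x3 Cx_ne_C : distinct.
#[local] Hint Extern 1 (le _ _) => lia : distinct.
#[local] Hint Extern 1 (lt _ _) => lia : distinct.
#[local] Hint Extern 1 (~ @eq nat _ _) => lia : distinct.

Ltac distinct :=
  first [ solve [eauto with distinct] | apply not_eq_sym; solve [eauto with distinct] ].

Definition cert0 : certificate :=
  Certificate (indic x1) (fun x => - indic x2 x) (fun x => indic z3 x - indic (C 1%nat) x).

Definition cert_top (N : nat) : certificate :=
  Certificate (fun x => indic (A N) x + indic (D N) x) (fun x => - indic (B N) x - indic (E N) x)
    (indic (C (N + 1)%nat)).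

Definition cert_quad (N : nat) : certificate :=
  Certificate (indic (A N)) (indic (E N))
    (fun x => - indic (C N) x - 2 * indic (Cx z3 C (N - 1)) x).

Ltac eval_indic := repeat first [ rewrite indic_same | rewrite indic_other by distinct ].

Ltac solve_profile :=
  unfold profile; cbn [cert0 cert_top cert_quad c1 c2 c3 P1 P2 P3 fst snd]; eval_indic;
  apply (f_equal2 pair); [apply (f_equal2 pair) |]; lra.

Ltac profiles_differ := let H := fresh in intro H; injection H; intros; lra.

Lemma cert0_profiles :
  profile cert0 (x1, x2, x3) = (1, -1, 0) /\ profile cert0 (y1, y2, x3) = (0, 0, 0) /\
  profile cert0 (y1, x2, z3) = (0, -1, 1) /\ profile cert0 (x1, y2, C 1%nat) = (1, 0, -1).
Proof. repeat split; solve_profile. Qed.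

Lemma not_full_gen0 (S : X1 * X2 * X3 -> Prop) :
  (forall w, S w -> gen0 w) -> (exists v w, S v /\ S w /\ v <> w) -> ~ full S.
Proof.
  intros HS.
  destruct cert0_profiles as (Pa & Pb & Pc & Pd).
  apply (not_full_of_injective_profile S cert0).
  - intros w Hw; destruct (HS w Hw) as [-> | [-> | [-> | ->]]];
      [rewrite (eval_of_profile _ _ _ _ _ Pa) | rewrite (eval_of_profile _ _ _ _ _ Pb)
      | rewrite (eval_of_profile _ _ _ _ _ Pc) | rewrite (eval_of_profile _ _ _ _ _ Pd)]; lra.
  - intros v w Hv Hw.
    destruct (HS v Hv) as [-> | [-> | [-> | ->]]], (HS w Hw) as [-> | [-> | [-> | ->]]];
      rewrite ?Pa, ?Pb, ?Pc, ?Pd; first [reflexivity | profiles_differ].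
Qed.

Lemma cert_quad_profiles N : (1 <= N)%nat ->
  profile (cert_quad N) (A N, B N, C N) = (1, 0, -1) /\
  profile (cert_quad N) (D N, E N, C N) = (0, 1, -1) /\
  profile (cert_quad N) (A N, E N, Cx z3 C (N - 1)) = (1, 1, -2) /\
  profile (cert_quad N) (D N, B N, x3) = (0, 0, 0).
Proof. intros; repeat split; solve_profile. Qed.

Lemma not_full_quad N (S : X1 * X2 * X3 -> Prop) : (1 <= N)%nat ->
  (forall w, S w -> quad N w) -> (exists v w, S v /\ S w /\ v <> w) -> ~ full S.
Proof.
  intros HN HS.
  destruct (cert_quad_profiles N HN) as (Pa & Pb & Pc & Pd).
  apply (not_full_of_injective_profile S (cert_quad N)).
  - intros w Hw; destruct (HS w Hw) as [-> | [-> | [-> | ->]]];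
      [rewrite (eval_of_profile _ _ _ _ _ Pa) | rewrite (eval_of_profile _ _ _ _ _ Pb)
      | rewrite (eval_of_profile _ _ _ _ _ Pc) | rewrite (eval_of_profile _ _ _ _ _ Pd)]; lra.
  - intros v w Hv Hw.
    destruct (HS v Hv) as [-> | [-> | [-> | ->]]], (HS w Hw) as [-> | [-> | [-> | ->]]];
      rewrite ?Pa, ?Pb, ?Pc, ?Pd; first [reflexivity | profiles_differ].
Qed.

Lemma cert_top_quad N w : (1 <= N)%nat -> quad N w -> profile (cert_top N) w = (1, -1, 0).
Proof. intros HN [-> | [-> | [-> | ->]]]; solve_profile. Qed.

Lemma cert_top_apex N : (1 <= N)%nat -> profile (cert_top N) (apex N) = (0, -1, 1).
Proof. intros HN; unfold apex; solve_profile. Qed.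

Lemma cert_top_below N m w : (1 <= N)%nat -> (m < N)%nat -> generation m w ->
  profile (cert_top N) w = (0, 0, 0).
Proof.
  intros HN Hm [[-> [-> | [-> | [-> | ->]]]] | [Hm1 [[-> | [-> | [-> | ->]]] | ->]]];
    unfold apex; solve_profile.
Qed.

Lemma top_profile_cases N n w : (1 <= N)%nat -> (n <= N)%nat -> generation n w ->
  (quad N w /\ profile (cert_top N) w = (1, -1, 0)) \/
  (w = apex N /\ profile (cert_top N) w = (0, -1, 1)) \/
  profile (cert_top N) w = (0, 0, 0).
Proof.
  intros HN Hn Hg; destruct (Nat.eq_dec n N) as [-> | HnN].
  - destruct Hg as [[-> _] | [_ [Hq | ->]]]; [lia | left | right; left];
      auto using cert_top_quad, cert_top_apex.
  - right; right; apply (cert_top_below N n); auto; lia.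
Qed.

(* A set of points of generation at most N >= 1, meeting generation N and with two points,
   is not full: either cert_top N separates two of its points, or all its points share
   the profile of a generation-N point, placing the set inside the quad or inside {apex}. *)
Lemma not_full_top N (S : X1 * X2 * X3 -> Prop) : (1 <= N)%nat ->
  (exists k, S k /\ generation N k) ->
  (forall w, S w -> exists n, (n <= N)%nat /\ generation n w) ->
  (exists v w, S v /\ S w /\ v <> w) -> ~ full S.
Proof.
  intros HN (k & Hk & HkN) Hgen Htwo.
  assert (Hcases : forall w, S w ->
    (quad N w /\ profile (cert_top N) w = (1, -1, 0)) \/
    (w = apex N /\ profile (cert_top N) w = (0, -1, 1)) \/ profile (cert_top N) w = (0, 0, 0)).
  { intros w Hw; destruct (Hgen w Hw) as (n & Hn & Hg); exact (top_profile_cases N n w HN Hn Hg). }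
  assert (Hd : annihilates (cert_top N) S).
  { intros w Hw; destruct (Hcases w Hw) as [[_ P] | [[_ P] | P]];
      rewrite (eval_of_profile _ _ _ _ _ P); lra. }
  destruct (classic (exists u, S u /\ profile (cert_top N) u <> profile (cert_top N) k))
    as [(u & Hu & Hne) | Hsame].
  { exact (not_full_of_profiles S (cert_top N) u k Hd Hu Hk Hne). }
  assert (Hk_profile : forall u, S u -> profile (cert_top N) u = profile (cert_top N) k).
  { intros u Hu; apply NNPP; eauto. }
  destruct HkN as [[-> _] | [_ [Hq | ->]]]; [lia | |].
  - apply (not_full_quad N S HN); [| exact Htwo].
    rewrite (cert_top_quad N k HN Hq) in Hk_profile.
    intros u Hu; destruct (Hcases u Hu) as [[Hqu _] | [[_ P] | P]]; [exact Hqu | |];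
      rewrite (Hk_profile u Hu) in P; exfalso; revert P; profiles_differ.
  - rewrite (cert_top_apex N HN) in Hk_profile.
    assert (Hall : forall u, S u -> u = apex N).
    { intros u Hu; destruct (Hcases u Hu) as [[_ P] | [[-> _] | P]]; [| reflexivity |];
        rewrite (Hk_profile u Hu) in P; exfalso; revert P; profiles_differ. }
    destruct Htwo as (v & w & Hv & Hw & Hvw).
    contradiction (Hvw (eq_trans (Hall v Hv) (eq_sym (Hall w Hw)))).
Qed.

End Construction.

Theorem mainTheorem4 (X1 X2 X3 : Type)
  (x1 y1 : X1) (A D : nat -> X1) (x2 y2 : X2) (B E : nat -> X2)
  (x3 z3 : X3) (C : nat -> X3) :
  distinct_data x1 y1 A D x2 y2 B E x3 z3 C ->
  forall S : X1 * X2 * X3 -> Prop,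
    (forall w, S w -> Tset x1 y1 A D x2 y2 B E x3 z3 C w) ->
    finite_set S ->
    (exists v w, S v /\ S w /\ v <> w) ->
    ~ full S.
Proof.
  intros Hdata S HT Hfin Htwo.
  assert (Hne : exists v, S v) by (destruct Htwo as (v & _ & Hv & _); exists v; exact Hv).
  destruct (top_generation x1 y1 A D x2 y2 B E x3 z3 C S HT Hfin Hne) as (N & Hk & Hgen).
  destruct (Nat.eq_dec N 0) as [-> | HN].
  - apply (not_full_gen0 x1 y1 A D x2 y2 B E x3 z3 C Hdata S); [| exact Htwo].
    intros w Hw; destruct (Hgen w Hw) as (n & Hn & [[_ H0] | [Hn1 _]]); [exact H0 | lia].
  - exact (not_full_top x1 y1 A D x2 y2 B E x3 z3 C Hdata N S ltac:(lia) Hk Hgen Htwo).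
Qed.
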